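(* Let $S$ be the $3\times 8$ matrix \[ S=\begin{bmatrix} 0 & \epsilon_1 & 0 & 0 & \epsilon_2 & \epsilon_3 & 0 & \epsilon_4 \\ 0 & 0 & -1 & 0 & -1 & 0 & -1 & -1 \\ 0 & 0 & 0 & -1 & 0 & -1 & -1 & -1 \end{bmatrix}, \] where $\epsilon_1,\epsilon_2,\epsilon_3,\epsilon_4\in\{-1,1\}$ and at least one $\epsilon_i$ equals $1$. Let $\sigma=(\sigma_1,\sigma_2,\sigma_3,\sigma_4)\in\{+,-\}^4$ with $\sigma_i$ the sign of $\epsilon_i$, and let $r\in[0,1)^3$ be such that $r+S$ is totally $1$-submodular. (i) If $\sigma \in \{(+,-,+,-),(-,+,-,+)\}$, then $r \in \mathrm{conv}\{(0,\tfrac14,\tfrac12)^\intercal,(0,\tfrac34,\tfrac12)^\intercal\}$. (ii) If $\sigma \in \{(+,+,-,-),(-,-,+,+)\}$, then $r \in \mathrm{conv}\{(0,\tfrac12,\tfrac14)^\intercal,(0,\tfrac12,\tfrac34)^\intercal\}$. (iii) If $\sigma$ is none of the four sign vectors listed in (i) and (ii), then $r=(0,\tfrac12,\tfrac12)^\intercal$.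
   Context: A real matrix is totally $1$-submodular if every square submatrix (of every size) has determinant of absolute value at most $1$. For $r\in\mathbb{R}^3$, $r+S$ denotes the matrix obtained by adding $r$ to every column of $S$. (Such $S$ are exactly the Sauer Matrices of size 3 and type $(1,2)$: each subset of $\{1,2,3\}$ is the support of exactly one column, and exactly the first row contains an entry equal to $1$.) *)

From HB Require Import structures.
From mathcomp Require Import all_boot all_order all_algebra.
Set Implicit Arguments. Unset Strict Implicit. Unset Printing Implicit Defensive.
Import Order.TTheory GRing.Theory Num.Theory.
Local Open Scope ring_scope.

Definition totally_1_submodular (R : numDomainType) (m n : nat)
  (A : 'M[R]_(m, n)) : Prop :=
  forall (k : nat) (f : 'I_k -> 'I_m) (g : 'I_k -> 'I_n),
    {homo f : x y / (x < y)%N >-> (x < y)%N} ->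
    {homo g : x y / (x < y)%N >-> (x < y)%N} ->
    `|\det (\matrix_(i < k, j < k) A (f i) (g j))| <= 1.

Definition add_col (R : zmodType) (m n : nat) (r : 'cV[R]_m) (S : 'M[R]_(m, n))
  : 'M[R]_(m, n) := \matrix_(i, j) (r i 0 + S i j).

Definition S_mat (R : ringType) (e1 e2 e3 e4 : R) : 'M[R]_(3, 8) :=
  \matrix_(i < 3, j < 8)
    nth 0 (nth [::] [:: [:: 0; e1; 0; 0; e2; e3; 0; e4];
                        [:: 0; 0; -1; 0; -1; 0; -1; -1];
                        [:: 0; 0; 0; -1; 0; -1; -1; -1]] i) j.

Definition conv2 (R : numDomainType) (m : nat) (a b x : 'cV[R]_m) : Prop :=
  exists t : R, [/\ 0 <= t, t <= 1 & x = (1 - t) *: a + t *: b].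

Definition vec3 (R : ringType) (x y z : R) : 'cV[R]_3 :=
  \col_(i < 3) nth 0 [:: x; y; z] i.

(* The first row of r + S contains r_1 + 1 (in a column where eps_i = 1), so
   r_1 = 0.  Writing r = (0, b, c), twelve of the 2 x 2 and 3 x 3 minors of
   r + S are then polynomials in b and c whose coefficients are built from the
   eps_i, and become affine in (b, c) once the signs are fixed.  For every
   admissible sign pattern, the conditions |minor| <= 1 together with
   0 <= b, c < 1 cut out exactly the segment or point of the statement. *)

From HB Require Import structures.
From mathcomp Require Import all_boot all_order all_algebra.
Set Implicit Arguments. Unset Strict Implicit. Unset Printing Implicit Defensive.
Import Order.TTheory GRing.Theory Num.Theory.
Local Open Scope ring_scope.
From mathcomp Require Import ring lra.

Lemma homo_nth_sorted k p (s : seq 'I_k) (x0 : 'I_k) :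
  (p <= size s)%N -> sorted (fun i j : 'I_k => (i < j)%N) s ->
  {homo (fun i : 'I_p => nth x0 s i) : x y / (x < y)%N >-> (x < y)%N}.
Proof.
move=> le_ps s_sorted x y.
apply: (sorted_ltn_nth (fun j i l : 'I_k => @ltn_trans j i l)) => //;
  by rewrite inE (leq_trans (ltn_ord _)).
Qed.

Section SortedMinors.

Variables (R : numDomainType) (m n : nat) (A : 'M[R]_(m, n)).
Hypothesis A_t1s : totally_1_submodular A.

Lemma t1s_sorted_minor (rs : seq 'I_m) (cs : seq 'I_n) (i0 : 'I_m) (j0 : 'I_n) :
  sorted (fun i j : 'I_m => (i < j)%N) rs -> sorted (fun i j : 'I_n => (i < j)%N) cs ->
  size cs = size rs ->
  `|\det (\matrix_(i < size rs, j < size rs) A (nth i0 rs i) (nth j0 cs j))| <= 1.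
Proof.
move=> rs_sorted cs_sorted size_cs.
apply: A_t1s; apply: homo_nth_sorted => //; by rewrite size_cs.
Qed.

Lemma t1s_entry i j : `|A i j| <= 1.
Proof. by have := @t1s_sorted_minor [:: i] [:: j] i j isT isT erefl; rewrite det_mx11 mxE. Qed.

Lemma t1s_minor2 (i1 i2 : 'I_m) (j1 j2 : 'I_n) : (i1 < i2)%N -> (j1 < j2)%N ->
  `|A i1 j1 * A i2 j2 - A i1 j2 * A i2 j1| <= 1.
Proof.
move=> lt_i lt_j.
have := @t1s_sorted_minor [:: i1; i2] [:: j1; j2] i1 j1; rewrite /= lt_i lt_j.
move=> /(_ isT isT erefl).
rewrite (expand_det_row _ ord0) !big_ord_recl big_ord0 /cofactor !det_mx11 !mxE /=.
by congr (`|_| <= 1); ring.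
Qed.

Lemma t1s_minor3 (i1 i2 i3 : 'I_m) (j1 j2 j3 : 'I_n) :
  (i1 < i2 < i3)%N -> (j1 < j2 < j3)%N ->
  `|A i1 j1 * (A i2 j2 * A i3 j3 - A i2 j3 * A i3 j2)
    - A i1 j2 * (A i2 j1 * A i3 j3 - A i2 j3 * A i3 j1)
    + A i1 j3 * (A i2 j1 * A i3 j2 - A i2 j2 * A i3 j1)| <= 1.
Proof.
move=> /andP[lt_i12 lt_i23] /andP[lt_j12 lt_j23].
have := @t1s_sorted_minor [:: i1; i2; i3] [:: j1; j2; j3] i1 j1.
rewrite /= lt_i12 lt_i23 lt_j12 lt_j23 => /(_ isT isT erefl).
rewrite !(expand_det_row _ ord0) !big_ord_recl big_ord0 /cofactor.
rewrite !(expand_det_row _ ord0) !big_ord_recl !big_ord0 /cofactor !det_mx11 !mxE /=.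
by congr (`|_| <= 1); ring.
Qed.

End SortedMinors.

Lemma segment_coord (R : realFieldType) (y1 y2 y : R) :
  y1 < y2 -> y1 <= y <= y2 -> exists2 t, 0 <= t <= 1 & y = (1 - t) * y1 + t * y2.
Proof.
move=> lt12 /andP[le1 le2]; have d_gt0 : 0 < y2 - y1 by rewrite subr_gt0.
exists ((y - y1) / (y2 - y1)); last by field; rewrite lt0r_neq0.
apply/andP; split; first by rewrite divr_ge0 ?subr_ge0 ?(ltW lt12).
by rewrite ler_pdivrMr // mul1r lerD2r.
Qed.

Lemma conv2_vec3 (R : numDomainType) (t x1 y1 z1 x2 y2 z2 : R) : 0 <= t <= 1 ->
  conv2 (vec3 x1 y1 z1) (vec3 x2 y2 z2)
        (vec3 ((1 - t) * x1 + t * x2) ((1 - t) * y1 + t * y2) ((1 - t) * z1 + t * z2)).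
Proof.
move=> /andP[t_ge0 t_le1]; exists t; split => //.
by apply/matrixP => i j; rewrite !mxE; case: i => [[|[|[|?]]] ?].
Qed.

Lemma conv2_vec3_y (R : realFieldType) (x z y1 y2 y : R) : y1 < y2 -> y1 <= y <= y2 ->
  conv2 (vec3 x y1 z) (vec3 x y2 z) (vec3 x y z).
Proof.
move=> lt12 /(segment_coord lt12) [t t01 ->].
by have := conv2_vec3 x y1 z x y2 z t01; rewrite -!mulrDl subrK !mul1r.
Qed.

Lemma conv2_vec3_z (R : realFieldType) (x y z1 z2 z : R) : z1 < z2 -> z1 <= z <= z2 ->
  conv2 (vec3 x y z1) (vec3 x y z2) (vec3 x y z).
Proof.
move=> lt12 /(segment_coord lt12) [t t01 ->].
by have := conv2_vec3 x y z1 x y z2 t01; rewrite -!mulrDl subrK !mul1r.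
Qed.

Local Notation ord3 k := (@Ordinal 3 k isT).
Local Notation ord8 k := (@Ordinal 8 k isT).

Lemma vec3_col (R : nzRingType) (v : 'cV[R]_3) :
  v = vec3 (v (ord3 0) 0) (v (ord3 1) 0) (v (ord3 2) 0).
Proof.
apply/matrixP => i j; rewrite (ord1 j) !mxE.
by case: i => [[|[|[|?]]] ?] //=; congr (v _ 0); apply: val_inj.
Qed.

(* Twelve minors of r + S for r = (0, b, c); their columns are listed in [shifted_minors_bounded]. *)
Definition shifted_minors (R : pzRingType) (e1 e2 e3 e4 b c : R) : seq R :=
  [:: (e1 - e3) * b; (e2 - e4) * (b - 1); (e1 - e2) * c; (e3 - e4) * (c - 1);
      e2 * b + e3 * c; e2 * (b - c) + e4 * c; e3 * (b - c) - e4 * b;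
      e1 * (1 - b) + e4 * c; e1 * (c - 1) - e4 * b;
      e4 * (1 - b - c) - e3 * (1 - b); e2 * (1 - c) + e4 * (b + c - 1);
      e2 * (c - 1) - e3 * (1 - b)].

Section ShiftedSauerMatrix.

Variables (R : realFieldType) (e1 e2 e3 e4 : R) (r : 'cV[R]_3).
Hypothesis e_one : e1 = 1 \/ e2 = 1 \/ e3 = 1 \/ e4 = 1.
Hypothesis r_range : forall i, 0 <= r i 0 /\ r i 0 < 1.
Hypothesis rS_t1s : totally_1_submodular (add_col r (S_mat e1 e2 e3 e4)).

Lemma r0_eq0 : r (ord3 0) 0 = 0.
Proof.
have := r_range (ord3 0).
have := t1s_entry rS_t1s (ord3 0) (ord8 1); have := t1s_entry rS_t1s (ord3 0) (ord8 4).
have := t1s_entry rS_t1s (ord3 0) (ord8 5); have := t1s_entry rS_t1s (ord3 0) (ord8 7).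
rewrite !mxE /= !ler_norml; case: e_one => [|[|[|]]] ->; lra.
Qed.

Lemma shifted_minors_bounded :
  all (fun x => `|x| <= 1) (shifted_minors e1 e2 e3 e4 (r (ord3 1) 0) (r (ord3 2) 0)).
Proof.
have m2 := t1s_minor2 rS_t1s.
have m3 j1 j2 j3 := @t1s_minor3 _ _ _ _ rS_t1s (ord3 0) (ord3 1) (ord3 2) j1 j2 j3 isT.
have := m2 (ord3 0) (ord3 1) (ord8 1) (ord8 5) isT isT.
have := m2 (ord3 0) (ord3 1) (ord8 4) (ord8 7) isT isT.
have := m2 (ord3 0) (ord3 2) (ord8 1) (ord8 4) isT isT.
have := m2 (ord3 0) (ord3 2) (ord8 5) (ord8 7) isT isT.
have := m3 (ord8 0) (ord8 4) (ord8 5) isT.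
have := m3 (ord8 0) (ord8 4) (ord8 7) isT.
have := m3 (ord8 0) (ord8 5) (ord8 7) isT.
have := m3 (ord8 1) (ord8 2) (ord8 7) isT.
have := m3 (ord8 1) (ord8 3) (ord8 7) isT.
have := m3 (ord8 2) (ord8 5) (ord8 7) isT.
have := m3 (ord8 3) (ord8 4) (ord8 7) isT.
have := m3 (ord8 4) (ord8 5) (ord8 6) isT.
(* Up to ring normalization, which lra performs, each minor is the listed polynomial. *)
rewrite !mxE /= r0_eq0 !ler_norml; lra.
Qed.

End ShiftedSauerMatrix.

Lemma sign_pattern_bounds (R : realFieldType) (e1 e2 e3 e4 b c : R) :
  (e1 = 1 \/ e1 = -1) -> (e2 = 1 \/ e2 = -1) ->
  (e3 = 1 \/ e3 = -1) -> (e4 = 1 \/ e4 = -1) ->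
  (e1 = 1 \/ e2 = 1 \/ e3 = 1 \/ e4 = 1) ->
  0 <= b /\ b < 1 -> 0 <= c /\ c < 1 ->
  all (fun x => `|x| <= 1) (shifted_minors e1 e2 e3 e4 b c) ->
  [/\ (e1, e2, e3, e4) = (1, -1, 1, -1) \/ (e1, e2, e3, e4) = (-1, 1, -1, 1) ->
        1/4 <= b <= 3/4 /\ c = 1/2,
      (e1, e2, e3, e4) = (1, 1, -1, -1) \/ (e1, e2, e3, e4) = (-1, -1, 1, 1) ->
        b = 1/2 /\ 1/4 <= c <= 3/4
    & ~ ((e1, e2, e3, e4) = (1, -1, 1, -1) \/ (e1, e2, e3, e4) = (-1, 1, -1, 1) \/
          (e1, e2, e3, e4) = (1, 1, -1, -1) \/ (e1, e2, e3, e4) = (-1, -1, 1, 1)) ->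
        b = 1/2 /\ c = 1/2].
Proof.
move=> e1_sign e2_sign e3_sign e4_sign e_one b_range c_range; rewrite /= !ler_norml.
case: e1_sign => ->; case: e2_sign => ->; case: e3_sign => ->; case: e4_sign => -> minors.
(* For the sign patterns of (i) and (ii) the third conclusion holds vacuously. *)
all: split=> [[E|E]|[E|E]|not_special]; try case: E => *;
  first [lra | by exfalso; apply: not_special; do ![by left | right]].
Qed.

Theorem proposition4p2 (R : realFieldType) (e1 e2 e3 e4 : R) (r : 'cV[R]_3) :
  (e1 = 1 \/ e1 = -1) -> (e2 = 1 \/ e2 = -1) ->
  (e3 = 1 \/ e3 = -1) -> (e4 = 1 \/ e4 = -1) ->
  (e1 = 1 \/ e2 = 1 \/ e3 = 1 \/ e4 = 1) ->
  (forall i, 0 <= r i 0 /\ r i 0 < 1) ->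
  totally_1_submodular (add_col r (S_mat e1 e2 e3 e4)) ->
  [/\ ((e1, e2, e3, e4) = (1, -1, 1, -1) \/ (e1, e2, e3, e4) = (-1, 1, -1, 1) ->
        conv2 (vec3 0 (1/4) (1/2)) (vec3 0 (3/4) (1/2)) r),
      ((e1, e2, e3, e4) = (1, 1, -1, -1) \/ (e1, e2, e3, e4) = (-1, -1, 1, 1) ->
        conv2 (vec3 0 (1/2) (1/4)) (vec3 0 (1/2) (3/4)) r)
    & (~ ((e1, e2, e3, e4) = (1, -1, 1, -1) \/ (e1, e2, e3, e4) = (-1, 1, -1, 1) \/
          (e1, e2, e3, e4) = (1, 1, -1, -1) \/ (e1, e2, e3, e4) = (-1, -1, 1, 1)) ->
        r = vec3 0 (1/2) (1/2))].
Proof.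
move=> e1_sign e2_sign e3_sign e4_sign e_one r_range rS_t1s.
have [alternating paired otherwise] :=
  sign_pattern_bounds e1_sign e2_sign e3_sign e4_sign e_one (r_range _) (r_range _)
    (shifted_minors_bounded e_one r_range rS_t1s).
rewrite [r]vec3_col (r0_eq0 e_one r_range rS_t1s).
split=> [/alternating [b_range ->] | /paired [-> c_range] | /otherwise [-> ->]] //.
- by apply: conv2_vec3_y => //; lra.
- by apply: conv2_vec3_z => //; lra.
Qed.
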